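(* Let $A$ be a commutative ring with $1\ne0$ and let $D(A)$ be the set of all divisibilities on $A$. The constructible topology on $D(A)$ is compact. In particular, the spectral topology on $D(A)$ is quasi-compact.
   Context: A divisibility on $A$ is a binary relation $|\subseteq A\times A$ such that for all $a,b,c$: (1) $a|a$; (2) $a|b,\ b|c\Rightarrow a|c$; (3) $a|b,\ a|c\Rightarrow a|b-c$; (4) $a|b\Rightarrow ac|bc$; (5) $0\nmid1$. The spectral topology on $D(A)$ is generated by the sets $U(a,b)=\{|\in D(A);\ a\nmid b\}$, $a,b\in A$; the constructible topology is generated by the sets $U(a,b)$ together with their complements $V(a,b)=\{|\in D(A);\ a|b\}$. *)

From Stdlib Require Import List.
From mathcomp Require Import all_boot all_algebra.
Set Implicit Arguments. Unset Strict Implicit. Unset Printing Implicit Defensive.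
Import GRing.Theory.
Local Open Scope ring_scope.

Definition is_divisibility (A : comNzRingType) (dv : A -> A -> Prop) : Prop :=
  [/\ (forall a, dv a a),
      (forall a b c, dv a b -> dv b c -> dv a c),
      (forall a b c, dv a b -> dv a c -> dv a (b - c)),
      (forall a b c, dv a b -> dv (a * c) (b * c)) &
      ~ dv 0 1].

Definition divisibility (A : comNzRingType) :=
  { dv : A -> A -> Prop | is_divisibility dv }.

Definition dvrel (A : comNzRingType) (d : divisibility A) : A -> A -> Prop :=
  proj1_sig d.

Definition Uset (A : comNzRingType) (a b : A) : divisibility A -> Prop :=
  fun d => ~ dvrel d a b.
Definition Vset (A : comNzRingType) (a b : A) : divisibility A -> Prop :=
  fun d => dvrel d a b.

Inductive gen_open (T : Type) (S : (T -> Prop) -> Prop) : (T -> Prop) -> Prop :=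
  | gen_open_sub : forall U, S U -> gen_open S U
  | gen_open_full : gen_open S (fun _ => True)
  | gen_open_inter : forall U V, gen_open S U -> gen_open S V ->
      gen_open S (fun x => U x /\ V x)
  | gen_open_union : forall (I : Type) (F : I -> T -> Prop),
      (forall i, gen_open S (F i)) -> gen_open S (fun x => exists i, F i x).

Definition quasi_compact (T : Type) (op : (T -> Prop) -> Prop) : Prop :=
  forall (I : Type) (F : I -> T -> Prop),
    (forall i, op (F i)) -> (forall x, exists i, F i x) ->
    exists s : seq I, forall x, exists2 i, List.In i s & F i x.

Definition hausdorff (T : Type) (op : (T -> Prop) -> Prop) : Prop :=
  forall x y : T, x <> y ->
    exists U V, [/\ op U, op V, U x, V y & forall z, ~ (U z /\ V z)].

Definition compact_space (T : Type) (op : (T -> Prop) -> Prop) : Prop :=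
  quasi_compact op /\ hausdorff op.

Definition spectral_open (A : comNzRingType) : (divisibility A -> Prop) -> Prop :=
  gen_open (fun W => exists a b : A, W = Uset a b).

Definition constructible_open (A : comNzRingType) : (divisibility A -> Prop) -> Prop :=
  gen_open (fun W => exists a b : A, W = Uset a b \/ W = Vset a b).

(* Identify a divisibility with the characteristic function of its graph, a
   point of the Cantor cube bool^(A * A), which is compact by Tychonoff. Each
   axiom of a divisibility only involves finitely many coordinates, so the
   divisibilities form a closed, hence compact, subset; the sets U(a,b) and
   V(a,b) are the traces of the coordinate clopens, so the constructible
   topology is the subspace topology and is quasi-compact. It is Hausdorff
   because it contains both U(a,b) and its complement V(a,b), and the coarser
   spectral topology inherits quasi-compactness. *)

From HB Require Import structures.
From mathcomp Require Import all_boot all_algebra.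
From mathcomp Require Import all_classical topology_structure compact.
From mathcomp Require Import discrete_topology bool_topology function_spaces.
Set Implicit Arguments.
Unset Strict Implicit.
Unset Printing Implicit Defensive.
Local Open Scope classical_set_scope.

Lemma In_mem (T : eqType) (x : T) (s : seq T) : x \in s -> List.In x s.
Proof.
by elim: s => //= y s IHs; rewrite in_cons => /orP[/eqP->|/IHs]; [left|right].
Qed.

Section GeneratedTopology.
Variable T : Type.

Lemma gen_open_mono (S1 S2 : (T -> Prop) -> Prop) (W : T -> Prop) :
  (forall V, S1 V -> S2 V) -> gen_open S1 W -> gen_open S2 W.
Proof.
move=> S12; elim=> [V /S12|||].
- exact: gen_open_sub.
- exact: gen_open_full.
- by move=> U V _ oU _ oV; exact: gen_open_inter.
- by move=> I F _ oF; exact: gen_open_union.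
Qed.

Lemma quasi_compact_mono (op1 op2 : (T -> Prop) -> Prop) :
  (forall W, op1 W -> op2 W) -> quasi_compact op2 -> quasi_compact op1.
Proof. by move=> op12 qc2 I F opF; apply: qc2 => i; apply: op12. Qed.

Variables (X : ptopologicalType) (e : T -> X).

Definition open_trace (W : T -> Prop) := exists O : set X, open O /\ W = e @^-1` O.

Lemma gen_open_trace (S : (T -> Prop) -> Prop) (W : T -> Prop) :
  (forall V, S V -> open_trace V) -> gen_open S W -> open_trace W.
Proof.
move=> Str; elim=> [V /Str //||U V _ [O [oO ->]] _ [O' [oO' ->]]|I F _ IHF].
- by exists setT; split=> //; exact: openT.
- by exists (O `&` O'); split=> //; exact: openI.
- have /choice[G FG] := IHF.
  exists (\bigcup_(i in setT) G i); split.
    by apply: bigcup_open => i _; case: (FG i).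
  have -> : F = fun i => e @^-1` G i by apply/funext => i; case: (FG i).
  rewrite preimage_bigcup; apply/funext => x; apply/propext.
  by split=> [[i Gix]|[i _ Gix]]; exists i.
Qed.

Lemma quasi_compact_trace (op : (T -> Prop) -> Prop) :
  compact (range e) -> (forall W, op W -> open_trace W) -> quasi_compact op.
Proof.
move=> cpt optr I F opF cov.
have /choice[G FG] : forall i : {classic I}, exists O, open O /\ F i = e @^-1` O.
  by move=> i; exact: optr (opF i).
have eF : F = fun i => e @^-1` G i by apply/funext => i; case: (FG i).
subst F; move: cpt; rewrite compact_cover => /(_ _ setT G) [i _|x [t _ <-]|D _ DG].
- by case: (FG i).
- by have [i Git] := cov t; exists i.
exists (finmap.enum_fset D) => t.
have [i /= Di Git] := DG (e t) (ex_intro2 _ _ t Logic.I erefl).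
by exists i; first exact: (@In_mem {classic I}).
Qed.

End GeneratedTopology.

Definition cantor_cube (A : comNzRingType) := prod_topology (fun _ : A * A => bool).
HB.instance Definition _ A := Pointed.on (cantor_cube A).
HB.instance Definition _ A := Topological.on (cantor_cube A).

Section DivisibilitySpace.
Variable A : comNzRingType.
Local Notation P := (cantor_cube A).

Lemma coord_preimage (p : A * A) (v : bool) :
  [set f : P | f p = v] = proj p @^-1` [set v].
Proof. by []. Qed.

Lemma open_coord (p : A * A) (v : bool) : open [set f : P | f p = v].
Proof.
rewrite coord_preimage; apply: open_comp; last exact: discrete_open.
by move=> f _; exact: proj_continuous.
Qed.

Lemma closed_coord (p : A * A) (v : bool) : closed [set f : P | f p = v].
Proof.
rewrite coord_preimage; apply: preimage_closed; last exact: discrete_closed.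
by move=> f _; exact: proj_continuous.
Qed.

Lemma closed_forall (I : Type) (F : I -> set P) :
  (forall i, closed (F i)) -> closed [set f | forall i, F i f].
Proof.
move=> cF; have := closed_bigI (fun i (_ : setT i) => cF i); congr closed.
by apply/funext => f; apply/propext; split=> Ff i //; exact: Ff.
Qed.

Lemma closed_coord_imply (p : A * A) (Q : set P) :
  closed Q -> closed [set f : P | f p -> Q f].
Proof.
move=> cQ; have -> : [set f : P | f p -> Q f] = [set f | f p = false] `|` Q.
  apply/funext => f; apply/propext; split=> /= [|[-> //|Qf _ //]].
  by case: (f p) => [Qf|_]; [right; apply: Qf | left].
by apply: closedU; [exact: closed_coord | exact: cQ].
Qed.

Definition dvchar (d : divisibility A) : P := fun p => `[< dvrel d p.1 p.2 >].

Lemma dvcharP (d : divisibility A) a b : dvchar d (a, b) <-> dvrel d a b.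
Proof. by split=> /asboolP. Qed.

Lemma range_dvchar :
  range dvchar = [set f : P | is_divisibility (fun a b => f (a, b))].
Proof.
apply/seteqP; split=> [_ [d _ <-]|f divf].
  case: (svalP d) => dv_refl dv_trans dv_sub dv_mul dv01.
  by split=> [a|a b c|a b c|a b c|]; rewrite ?dvcharP;
    [exact: dv_refl | exact: dv_trans | exact: dv_sub | exact: dv_mul |].
exists (exist _ (fun a b : A => (f (a, b) : Prop)) divf) => //.
apply: functional_extensionality_dep => -[a b].
by rewrite /dvchar /= asboolb.
Qed.

Lemma closed_range_dvchar : closed (range dvchar).
Proof.
rewrite range_dvchar.
have -> : [set f : P | is_divisibility (fun a b => f (a, b))] =
  [set f | forall a, f (a, a) = true] `&`
  [set f | forall a b c, f (a, b) -> f (b, c) -> f (a, c)] `&`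
  [set f | forall a b c, f (a, b) -> f (a, c) -> f (a, (b - c)%R)] `&`
  [set f | forall a b c, f (a, b) -> f ((a * c)%R, (b * c)%R)] `&`
  [set f | f (0%R, 1%R) = false].
  apply/seteqP; split=> f.
    by case=> ? ? ? ? /negP/negbTE.
  by move=> [[[[? ?] ?] ?] /negbT/negP].
repeat apply: closedI.
all: repeat (apply: closed_forall => ?).
all: repeat apply: closed_coord_imply.
all: exact: closed_coord.
Qed.

Lemma compact_range_dvchar : compact (range dvchar).
Proof.
apply: (subclosed_compact closed_range_dvchar _ (subsetT _)).
have := @tychonoff _ (fun _ : A * A => bool) _ (fun=> bool_compact).
by congr compact; rewrite eqEsubset.
Qed.

Lemma constructible_open_trace (W : divisibility A -> Prop) :
  constructible_open W -> open_trace dvchar W.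
Proof.
apply: gen_open_trace => _ [a [b [->|->]]].
- exists [set f : P | f (a, b) = false]; split; first exact: open_coord.
  apply/funext => d; apply/propext; rewrite /Uset /= -(dvcharP d a b).
  by split=> [/negP/negbTE|->].
- exists [set f : P | f (a, b) = true]; split; first exact: open_coord.
  by apply/funext => d; apply/propext; rewrite /Vset /= -(dvcharP d a b).
Qed.

Lemma divisibility_ext (d d' : divisibility A) :
  (forall a b, dvrel d a b <-> dvrel d' a b) -> d = d'.
Proof.
case: d d' => [dv dvP] [dv' dv'P] /= dd'.
have edv : dv = dv'.
  apply: functional_extensionality_dep => a; apply: functional_extensionality_dep => b.
  exact/propext/dd'.
by subst dv'; congr exist; exact: Prop_irrelevance.
Qed.

Lemma constructible_hausdorff : hausdorff (@constructible_open A).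
Proof.
move=> d d' dd'.
have [a [b ab]] : exists a b, ~ (dvrel d a b <-> dvrel d' a b).
  apply: contrapT => nab; apply: dd' (divisibility_ext _) => a b.
  by apply: contrapT => ab; apply: nab; exists a, b.
have oU : constructible_open (Uset a b) by apply: gen_open_sub; exists a, b; left.
have oV : constructible_open (Vset a b) by apply: gen_open_sub; exists a, b; right.
have [dab|ndab] := pselect (dvrel d a b).
- exists (Vset a b), (Uset a b).
  split; [exact: oV | exact: oU | exact: dab | | by move=> z []].
  by move=> d'ab; apply: ab; split=> _.
- exists (Uset a b), (Vset a b).
  split; [exact: oU | exact: oV | exact: ndab | | by move=> z []].
  by apply: contrapT => nd'ab; apply: ab; split=> [/ndab|/nd'ab].
Qed.

End DivisibilitySpace.

Theorem lemma3p3 (A : comNzRingType) :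
  compact_space (@constructible_open A) /\ quasi_compact (@spectral_open A).
Proof.
have constructible_qc : quasi_compact (@constructible_open A).
  exact: quasi_compact_trace (@compact_range_dvchar A) (@constructible_open_trace A).
split; first by split; [exact: constructible_qc | exact: constructible_hausdorff].
apply: quasi_compact_mono constructible_qc => W; apply: gen_open_mono.
by move=> _ [a [b ->]]; exists a, b; left.
Qed.
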